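(* Let $\mathcal{T}$ be a finite tree whose vertex set is partitioned into two sets $X$ and $Y$ with $\mathrm{Card}(X),\mathrm{Card}(Y)\ge 2$, every edge joining a vertex of $X$ to a vertex of $Y$; let $E\subseteq X\times Y$ be its set of edges. For $x\in X$, $y\in Y$ let $Y_x=\{y\in Y:(x,y)\in E\}$ and $X_y=\{x\in X:(x,y)\in E\}$. Let $(G,+)$ be an abelian group and $H$ a subgroup of $G$. Suppose $g:X\cup Y\cup E\to G$ satisfies: (1) $g(X\cup Y)\subseteq H$; (2) for all $x\in X$, $g(x)=\sum_{y\in Y_x}g(x,y)$, and for all $y\in Y$, $g(y)=\sum_{x\in X_y}g(x,y)$. Then $g(x,y)\in H$ for all $(x,y)\in E$. *)

From mathcomp Require Import all_boot all_order all_algebra.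
Set Implicit Arguments. Unset Strict Implicit. Unset Printing Implicit Defensive.
Import GRing.Theory.

Definition bip_adj (X Y : finType) (E : X -> Y -> bool) : rel (X + Y)%type :=
  fun u v => match u, v with
             | inl x, inr y => E x y
             | inr y, inl x => E x y
             | _, _ => false
             end.

Definition bip_connected (X Y : finType) (E : X -> Y -> bool) : Prop :=
  forall u v : (X + Y)%type, connect (bip_adj E) u v.

Definition bip_acyclic (X Y : finType) (E : X -> Y -> bool) : Prop :=
  ~ exists s : seq (X + Y)%type, [/\ 3 <= size s, uniq s & cycle (bip_adj E) s].

Definition bip_tree (X Y : finType) (E : X -> Y -> bool) : Prop :=
  bip_connected E /\ bip_acyclic E.

From mathcomp Require Import all_boot all_order all_algebra.
Import GRing.Theory.
Local Open Scope ring_scope.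

(* Delete the edge (x, y) from the tree and let C be the component of x; as
   (x, y) is a bridge, y lies outside C. Summing g over the vertices of C, with
   sign + on X and - on Y, every edge inside C contributes g(a, b) - g(a, b)
   by (2), and (x, y) is the only edge leaving C. So g(x, y) is that signed
   sum of vertex values, which lies in H by (1). *)

Lemma zmod_closed_sum (G : zmodType) (H : {pred G}) (I : finType)
    (P : pred I) (F : I -> G) :
  zmod_closed H -> (forall i, F i \in H) -> \sum_(i | P i) F i \in H.
Proof.
by move=> /GRing.zmod_closedD [H0 HD] HF; apply: (big_ind (fun u => u \in H)).
Qed.

Lemma sum_mulrn_cond (I J : finType) (P : pred I) (Q : I -> pred J)
    (G : zmodType) (F : I -> J -> G) :
  \sum_(i | P i) \sum_(j | Q i j) F i j = \sum_i \sum_(j | Q i j) F i j *+ P i.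
Proof. by rewrite big_mkcond; apply: eq_bigr => i _; rewrite sumrMnl mulrb. Qed.

Section BipartiteGraphs.
Context {X Y : finType} (E : X -> Y -> bool).

Lemma bip_adj_sym : symmetric (bip_adj E).
Proof. by move=> [a|b] [c|d]. Qed.

Lemma sub_bip_adj (E' : X -> Y -> bool) :
  (forall a b, E' a b -> E a b) -> subrel (bip_adj E') (bip_adj E).
Proof. by move=> sE'E [a|b] [c|d] //= /sE'E. Qed.

Lemma bip_connect_edge (w : X + Y) a b :
  E a b -> connect (bip_adj E) w (inl a) = connect (bip_adj E) w (inr b).
Proof.
move=> Eab; apply: (same_connect1r _ (Eab : bip_adj E (inl a) (inr b))).
exact/sym_connect_sym/bip_adj_sym.
Qed.

Definition del_edge (x : X) (y : Y) : X -> Y -> bool :=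
  fun a b => E a b && ((a, b) != (x, y)).

Lemma bip_acyclic_bridge x y :
  bip_acyclic E -> E x y -> ~~ connect (bip_adj (del_edge x y)) (inl x) (inr y).
Proof.
move=> acyclicE Exy; apply/negP => /connectP [p p_path p_last].
case: (shortenP p_path) p_last => q q_path q_uniq _ q_last.
apply: acyclicE; exists (inl x :: q); split => //.
- case: q q_path q_uniq q_last => [|v [|w q]] //= + _ v_y.
  by rewrite -v_y /del_edge eqxx andbF.
- rewrite /= rcons_path -q_last /= Exy andbT.
  by apply: sub_path q_path; apply: sub_bip_adj => a b /andP [].
Qed.

Lemma signed_sides_sum {G : zmodType} (C : pred (X + Y)) (F : X -> Y -> G) :
  \sum_(a | C (inl a)) \sum_(b | E a b) F a b
    - \sum_(b | C (inr b)) \sum_(a | E a b) F a b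
  = \sum_a \sum_(b | E a b) (F a b *+ C (inl a) - F a b *+ C (inr b)).
Proof.
rewrite sum_mulrn_cond [X in _ - X]sum_mulrn_cond.
rewrite [X in _ - X](exchange_big_dep predT) //= -sumrB.
by apply: eq_bigr => a _; rewrite sumrB.
Qed.

Lemma single_cut_sum {G : zmodType} (C : pred (X + Y)) (F : X -> Y -> G) x y :
    E x y -> C (inl x) -> ~~ C (inr y) ->
    (forall a b, del_edge x y a b -> C (inl a) = C (inr b)) ->
  \sum_(a | C (inl a)) \sum_(b | E a b) F a b
    - \sum_(b | C (inr b)) \sum_(a | E a b) F a b = F x y.
Proof.
move=> Exy Cx Cy C_uncut; rewrite signed_sides_sum pair_big_dep (bigD1 (x, y)) //=.
rewrite Cx (negbTE Cy) subr0 big1 ?addr0 // => -[a b] /= ab_uncut.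
by rewrite (C_uncut a b ab_uncut) subrr.
Qed.

End BipartiteGraphs.

Theorem lemma3p2 (X Y : finType) (E : X -> Y -> bool)
  (G : zmodType) (H : {pred G})
  (gX : X -> G) (gY : Y -> G) (gE : X -> Y -> G) :
  bip_tree E ->
  (2 <= #|X|)%N -> (2 <= #|Y|)%N ->
  zmod_closed H ->
  (forall x, gX x \in H) -> (forall y, gY y \in H) ->
  (forall x, gX x = \sum_(y | E x y) gE x y) ->
  (forall y, gY y = \sum_(x | E x y) gE x y) ->
  forall x y, E x y -> gE x y \in H.
Proof.
move=> [_ acyclicE] _ _ Hz HX HY sum_gX sum_gY x y Exy.
pose C := connect (bip_adj (del_edge E x y)) (inl x).
have y_notin_C : ~~ C (inr y) := bip_acyclic_bridge E x y acyclicE Exy.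
rewrite -(single_cut_sum E C gE x y Exy (connect0 _ _) y_notin_C
            (bip_connect_edge _ _)).
under eq_bigr do rewrite -sum_gX.
under [X in _ - X]eq_bigr do rewrite -sum_gY.
by apply: Hz.2; apply: zmod_closed_sum.
Qed.
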